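(* Let $k$ be a finite field and $r\ge2$. (a) The class $\mathfrak{N}_5$ of Lie algebras over $k$ satisfying the axioms $\Phi1$–$\Phi5$ coincides with the class of all $U$-algebras $B$ with $\dim_k B/\mathrm{Fit}(B)\le r$. (b) The class $\mathfrak{N}'_5$ of $F_r$-Lie algebras satisfying $\Phi1$–$\Phi4$ and $\Phi'5$ coincides with the class of all $F_r$-Lie algebras $B$ that are $U$-algebras with $\dim_k B/\mathrm{Fit}(B)=r$.
   Context: Products are left-normed. $\mathrm{Fit}(B)$ is the sum of all nilpotent ideals of $B$. A metabelian Lie algebra $B$ (one satisfying $(x_1x_2)(x_3x_4)=0$) is a $U$-algebra if $\mathrm{Fit}(B)$ is abelian and, with $n=\dim B/\mathrm{Fit}(B)$ finite, $\mathrm{Fit}(B)$ is a torsion-free module over $k[x_1,\dots,x_n]$, where the abelian algebra $B/\mathrm{Fit}(B)$ (with basis $\bar b_1,\dots,\bar b_n$) acts on $\mathrm{Fit}(B)$ by $u\cdot x_i=ub_i$. $F_r$ is the free metabelian Lie algebra of rank $r$ with free base $a_1,\dots,a_r$; an $F_r$-Lie algebra contains a designated copy of $F_r$. For a term $y$ and $f\in k[x_1,\dots,x_n]$, $y\cdot f(t_1,\dots,t_n)$ is the Lie term where monomial $x_{i_1}\cdots x_{i_t}$ acts by $y\mapsto yt_{i_1}\cdots t_{i_t}$, extended linearly. Let $\mathrm{Fit}(x)\equiv\forall y\,(xyx=0)$ and $\varphi(x_1,\dots,x_n)\equiv\bigwedge_{(\alpha_i)\in k^n\setminus\{0\}}\neg\mathrm{Fit}(\sum\alpha_ix_i)$.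 Axioms: $\Phi1$: $\forall x_1..x_4\,(x_1x_2)(x_3x_4)=0$. $\Phi2$: $\forall x,y\,(xyx=0\wedge xyy=0\to xy=0)$. $\Phi3$: $\forall x,y,z\,(x\ne0\wedge xy=0\wedge xz=0\to yz=0)$. $\Phi4$: $\forall x_1..x_{r+1}\,\neg\varphi(x_1..x_{r+1})$. $\Phi5$: for every $n\le r$ and nonzero $f\in k[x_1..x_n]$: $\forall z_1,z_2,x_1..x_n\,((z_1z_2)\cdot f(x_1..x_n)=0\wedge z_1z_2\ne0\to\neg\varphi(x_1..x_n))$. $\Phi'5$: for every nonzero $f\in k[x_1..x_r]$: $\forall z_1,z_2\,((z_1z_2)\cdot f(a_1..a_r)=0\to z_1z_2=0)$. *)

(* Lie algebras over a field k are encoded as an lmodType k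
   together with a bracket (not bundled); products are left-normed. *)
From HB Require Import structures.
From mathcomp Require Import all_boot all_order all_algebra.
From mathcomp Require Import mpoly.
Set Implicit Arguments. Unset Strict Implicit. Unset Printing Implicit Defensive.
Import GRing.Theory.
Local Open Scope ring_scope.

Section Lie.
Variable k : fieldType.

Definition is_lie (V : lmodType k) (br : V -> V -> V) : Prop :=
  [/\ (forall (a : k) x y z, br (a *: x + y) z = a *: br x z + br y z),
      (forall (a : k) x y z, br z (a *: x + y) = a *: br z x + br z y),
      (forall x, br x x = 0) &
      (forall x y z, br (br x y) z + br (br y z) x + br (br z x) y = 0)].

Variables (V : lmodType k) (br : V -> V -> V).

Definition lnprod (x : V) (s : seq V) : V := foldl br x s.

Definition is_ideal (I : V -> Prop) : Prop :=
  [/\ I 0, (forall x y, I x -> I y -> I (x + y)),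
      (forall (a : k) x, I x -> I (a *: x)) &
      (forall x y, I x -> I (br x y))].

Definition nilpotent_ideal (I : V -> Prop) : Prop :=
  exists c : nat, forall (x : V) (s : seq V),
    I x -> (forall y, y \in s -> I y) -> size s = c -> lnprod x s = 0.

Definition Fit (x : V) : Prop :=
  exists (n : nat) (f : 'I_n -> V),
    (forall i, exists I, [/\ is_ideal I, nilpotent_ideal I & I (f i)]) /\
    x = \sum_(i < n) f i.

Definition metabelian : Prop :=
  forall x1 x2 x3 x4, br (br x1 x2) (br x3 x4) = 0.

(* b_1..b_n is a family whose images form a basis of V / S *)
Definition basis_mod (S : V -> Prop) (n : nat) (b : 'I_n -> V) : Prop :=
  (forall x, exists alpha : 'I_n -> k, S (x - \sum_(i < n) alpha i *: b i)) /\
  (forall alpha : 'I_n -> k, S (\sum_(i < n) alpha i *: b i) ->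
     forall i, alpha i = 0).

(* y . x^m (t) : monomial x_0^{m_0} ... x_{n-1}^{m_{n-1}} acting by
   y |-> y t_0 ... t_0 t_1 ... (left-normed) *)
Definition mono_act (n : nat) (y : V) (t : 'I_n -> V) (m : 'X_{1..n}) : V :=
  foldl (fun z i => iter (m i) (fun w => br w (t i)) z) y (enum 'I_n).

Definition poly_act (n : nat) (y : V) (t : 'I_n -> V) (f : {mpoly k[n]}) : V :=
  \sum_(m <- msupp f) f@_m *: mono_act y t m.

(* Fit(B) is a torsion-free k[x_1..x_n]-module with x_i acting as ad b_i *)
Definition torsion_free (n : nat) (b : 'I_n -> V) : Prop :=
  forall (f : {mpoly k[n]}), f != 0 ->
    forall u, Fit u -> poly_act u b f = 0 -> u = 0.

Definition U_algebra_dim (n : nat) : Prop :=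
  [/\ metabelian,
      (forall x y, Fit x -> Fit y -> br x y = 0) &
      exists b : 'I_n -> V, basis_mod Fit b /\ torsion_free b].

(* first-order formulas Fit(x) and phi(x_1..x_n) *)
Definition FitF (x : V) : Prop := forall y, br (br x y) x = 0.

Definition phi (n : nat) (x : 'I_n -> V) : Prop :=
  forall alpha : 'I_n -> k, (exists i, alpha i != 0) ->
    ~ FitF (\sum_(i < n) alpha i *: x i).

Definition Phi1 : Prop := metabelian.
Definition Phi2 : Prop :=
  forall x y, br (br x y) x = 0 /\ br (br x y) y = 0 -> br x y = 0.
Definition Phi3 : Prop :=
  forall x y z, [/\ x <> 0, br x y = 0 & br x z = 0] -> br y z = 0.
Definition Phi4 (r : nat) : Prop :=
  forall x : 'I_r.+1 -> V, ~ phi x.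
Definition Phi5 (r : nat) : Prop :=
  forall (n : nat), (n <= r)%N -> forall f : {mpoly k[n]}, f != 0 ->
    forall (z1 z2 : V) (x : 'I_n -> V),
      poly_act (br z1 z2) x f = 0 /\ br z1 z2 <> 0 -> ~ phi x.
Definition Phi'5 (r : nat) (a : 'I_r -> V) : Prop :=
  forall f : {mpoly k[r]}, f != 0 ->
    forall z1 z2 : V, poly_act (br z1 z2) a f = 0 -> br z1 z2 = 0.

End Lie.

Inductive lie_term (k : fieldType) (r : nat) : Type :=
| LVar of 'I_r
| LZero
| LAdd of lie_term k r & lie_term k r
| LScale of k & lie_term k r
| LBr of lie_term k r & lie_term k r.

Fixpoint lie_eval (k : fieldType) (r : nat) (V : lmodType k)
    (br : V -> V -> V) (a : 'I_r -> V) (t : lie_term k r) : V :=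
  match t with
  | LVar i => a i
  | LZero => 0
  | LAdd t1 t2 => lie_eval br a t1 + lie_eval br a t2
  | LScale c t1 => c *: lie_eval br a t1
  | LBr t1 t2 => br (lie_eval br a t1) (lie_eval br a t2)
  end.

(* a_1..a_r freely generate a free metabelian Lie subalgebra (a designated
   copy of F_r): the only relations among the a_i are those holding in
   every metabelian Lie algebra over k. *)
Definition free_metabelian_gens (k : fieldType) (r : nat) (B : lmodType k)
    (brB : B -> B -> B) (a : 'I_r -> B) : Prop :=
  forall t1 t2 : lie_term k r,
    lie_eval brB a t1 = lie_eval brB a t2 ->
    forall (C : lmodType k) (brC : C -> C -> C),
      is_lie brC -> metabelian brC ->
      forall c : 'I_r -> C, lie_eval brC c t1 = lie_eval brC c t2.

From HB Require Import structures.
From mathcomp Require Import all_boot all_order all_algebra.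
From mathcomp Require Import mpoly ring.
From Stdlib Require Import Classical.
Set Implicit Arguments. Unset Strict Implicit. Unset Printing Implicit Defensive.
Import GRing.Theory.
Local Open Scope ring_scope.

(* In a metabelian algebra every product lies in the abelian ideal B^2, so in
   Fit(B).  Axiom Phi2 makes every nilpotent ideal, hence Fit(B), abelian, and
   then Fit(B) is exactly the set defined by the formula Fit(x).  Once Fit(B)
   is abelian, the action of k[x_1..x_n] on Fit(B) only depends on the acting
   elements modulo Fit(B) and is compatible with linear substitutions, so
   torsion-freeness over a basis of B/Fit(B) passes to every family that is
   independent modulo Fit(B), i.e. satisfies phi.  This gives Phi2-Phi5 for
   U-algebras.  Conversely Phi4 bounds independent families by r, so a maximal
   one is a basis of B/Fit(B), and Phi5 gives torsion-freeness on products;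
   Phi3 extends it to all of Fit(B).  For (b), a nontrivial combination of free
   metabelian generators is never in Fit, as the two-dimensional non-abelian
   Lie algebra shows. *)

Section MpolyLinearSubst.
Variable k : fieldType.

Lemma comp_mpoly_row_free_eq0 n N (c : 'M[k]_(N, n)) (f : {mpoly k[N]}) :
  row_free c -> f \mPo [tuple \sum_i c j i *: 'X_i | j < N] = 0 -> f = 0.
Proof.
case/row_freeP=> d cd.
set l := [tuple \sum_i c j i *: 'X_i | j < N].
set s := [tuple \sum_j d i j *: ('X_j : {mpoly k[N]}) | i < n].
suff lsK : (f \mPo l) \mPo s = f by move=> fl0; rewrite -lsK fl0 comp_mpoly0.
have lsX j : (tnth l j) \mPo s = 'X_j.
  rewrite tnth_mktuple raddf_sum /=.
  under eq_bigr => i _ do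
    rewrite comp_mpolyZ comp_mpolyXU -tnth_nth tnth_mktuple scaler_sumr.
  rewrite exchange_big /= (bigD1 j) //= [X in _ + X]big1 => [|j' nj'j].
    rewrite addr0; under eq_bigr => i _ do rewrite scalerA.
    rewrite -scaler_suml.
    by have := congr1 (fun M : 'M[k]_N => M j j) cd; rewrite !mxE eqxx => ->; rewrite scale1r.
  under eq_bigr => i _ do rewrite scalerA.
  rewrite -scaler_suml.
  have := congr1 (fun M : 'M[k]_N => M j j') cd.
  by rewrite !mxE eq_sym (negbTE nj'j) => ->; rewrite scale0r.
rewrite [in RHS](mpolyE f) (comp_mpolyEX f l) raddf_sum /=.
apply: eq_bigr => m _; rewrite comp_mpolyZ comp_mpolyX rmorph_prod /=.
congr (_ *: _); rewrite mpolyXE_id; apply: eq_bigr => i _.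
by rewrite rmorphXn /= lsX.
Qed.

Lemma mcoeff_linear_form n (al : 'I_n -> k) j :
  (\sum_i al i *: ('X_i : {mpoly k[n]}))@_U_(j) = al j.
Proof.
rewrite raddf_sum /= (bigD1 j) //= big1 => [|i nij].
  by rewrite mcoeffZ mcoeffXU eqxx mulr1 addr0.
by rewrite mcoeffZ mcoeffXU (negbTE nij) mulr0.
Qed.

End MpolyLinearSubst.

Section LieAlgebra.
Variables (k : fieldType) (V : lmodType k) (br : V -> V -> V).
Hypothesis lieV : is_lie br.

Lemma brDl x y z : br (x + y) z = br x z + br y z.
Proof. by case: lieV => H _ _ _; have := H 1 x y z; rewrite !scale1r. Qed.

Lemma brDr x y z : br z (x + y) = br z x + br z y.
Proof. by case: lieV => _ H _ _; have := H 1 x y z; rewrite !scale1r. Qed.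

Lemma br0l z : br 0 z = 0.
Proof. by apply: (addrI (br 0 z)); rewrite -brDl !addr0. Qed.

Lemma br0r z : br z 0 = 0.
Proof. by apply: (addrI (br z 0)); rewrite -brDr !addr0. Qed.

Lemma brZl a x z : br (a *: x) z = a *: br x z.
Proof. by case: lieV => H _ _ _; have := H a x 0 z; rewrite !addr0 br0l addr0. Qed.

Lemma brZr a x z : br z (a *: x) = a *: br z x.
Proof. by case: lieV => _ H _ _; have := H a x 0 z; rewrite !addr0 br0r addr0. Qed.

Lemma brNl x z : br (- x) z = - br x z.
Proof. by rewrite -scaleN1r brZl scaleN1r. Qed.

Lemma brxx x : br x x = 0.
Proof. by case: lieV. Qed.

Lemma brC x y : br x y = - br y x.
Proof.
apply/eqP; rewrite -addr_eq0.
by have := brxx (x + y); rewrite brDl !brDr !brxx add0r addr0 => ->.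
Qed.

Lemma jacobi x y z : br (br x y) z + br (br y z) x + br (br z x) y = 0.
Proof. by case: lieV. Qed.

Lemma br_suml I (s : seq I) P (F : I -> V) z :
  br (\sum_(i <- s | P i) F i) z = \sum_(i <- s | P i) br (F i) z.
Proof. by apply: (big_morph (br^~ z)) => [x y|]; rewrite ?brDl ?br0l. Qed.

Lemma br_sumr I (s : seq I) P (F : I -> V) z :
  br z (\sum_(i <- s | P i) F i) = \sum_(i <- s | P i) br z (F i).
Proof. by apply: (big_morph (br z)) => [x y|]; rewrite ?brDr ?br0r. Qed.

Lemma Fit0 : Fit br 0.
Proof. by exists 0%N, (fun _ => 0); split=> [[]//|]; rewrite big_ord0. Qed.

Lemma Fit_nilpotent_ideal (I : V -> Prop) x :
  is_ideal br I -> nilpotent_ideal br I -> I x -> Fit br x.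
Proof.
move=> idI nilI Ix; exists 1%N, (fun _ => x); split; first by move=> _; exists I.
by rewrite big_ord1.
Qed.

Lemma FitD x y : Fit br x -> Fit br y -> Fit br (x + y).
Proof.
move=> [n [f [Hf ->]]] [m [g [Hg ->]]].
exists (n + m)%N, (fun i => match split i with inl j => f j | inr j => g j end).
split; first by move=> i; case: (split i) => j; [apply: Hf | apply: Hg].
rewrite big_split_ord /=; congr (_ + _); apply: eq_bigr => i _.
  by have := @unsplitK n m (inl _ i); rewrite /= => ->.
by have := @unsplitK n m (inr _ i); rewrite /= => ->.
Qed.

Lemma FitZ a x : Fit br x -> Fit br (a *: x).
Proof.
move=> [n [f [Hf ->]]]; exists n, (fun i => a *: f i); split; last by rewrite scaler_sumr.
move=> i; have [I [idI nilI Ifi]] := Hf i.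
by exists I; split=> //; case: idI => _ _ idZ _; apply: idZ.
Qed.

Lemma Fit_sum I (s : seq I) (P : pred I) (F : I -> V) :
  (forall i, P i -> Fit br (F i)) -> Fit br (\sum_(i <- s | P i) F i).
Proof.
move=> FitF; elim: s => [|i s IH]; first by rewrite big_nil; apply: Fit0.
by rewrite big_cons; case: ifP => // Pi; apply: FitD => //; apply: FitF.
Qed.

Lemma Fit_brl x y : Fit br x -> Fit br (br x y).
Proof.
move=> [n [f [Hf ->]]]; exists n, (fun i => br (f i) y).
split; last by rewrite br_suml.
move=> i; have [I [idI nilI Ifi]] := Hf i.
by exists I; split=> //; case: idI => _ _ _ idbr; apply: idbr.
Qed.

Lemma Fit_iter_br j y w : Fit br w -> Fit br (iter j (br^~ y) w).
Proof. by move=> Fw; elim: j => //= j IH; apply: Fit_brl. Qed.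

Definition Fit_span n (b : 'I_n -> V) :=
  forall x, exists al : 'I_n -> k, Fit br (x - \sum_i al i *: b i).

Definition Fit_indep n (b : 'I_n -> V) :=
  forall al : 'I_n -> k, Fit br (\sum_i al i *: b i) -> forall i, al i = 0.

Lemma Fit_indep_phi n (b : 'I_n -> V) :
  (forall x, FitF br x -> Fit br x) -> Fit_indep b -> phi br b.
Proof.
move=> FitFP indb al [i nz_ali] /FitFP Fal.
by move: nz_ali; rewrite (indb al Fal i) eqxx.
Qed.

Lemma phi_Fit_indep n (b : 'I_n -> V) :
  (forall x, Fit br x -> FitF br x) -> phi br b -> Fit_indep b.
Proof.
move=> FitP phib al /FitP Fal i; apply/eqP/negP => /negP nz_ali.
exact: (phib al (ex_intro _ i nz_ali) Fal).
Qed.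

Section PolyAction.
Variables (n : nat) (t : 'I_n -> V).

Lemma poly_act_supp w (f : {mpoly k[n]}) (s : seq 'X_{1..n}) :
  uniq s -> {subset msupp f <= s} ->
  poly_act br w t f = \sum_(m <- s) f@_m *: mono_act br w t m.
Proof.
move=> uniq_s supp_s; rewrite /poly_act [RHS](bigID (mem (msupp f))) /=.
rewrite [X in _ + X]big1 ?addr0; last first.
  by move=> m; rewrite -mcoeff_eq0 => /eqP ->; rewrite scale0r.
rewrite -[RHS]big_filter; apply/perm_big/uniq_perm.
- exact: msupp_uniq.
- exact: filter_uniq.
- by move=> m; rewrite mem_filter; case: (boolP (m \in msupp f)) => // /supp_s ->.
Qed.

Lemma poly_actD w (f g : {mpoly k[n]}) :
  poly_act br w t (f + g) = poly_act br w t f + poly_act br w t g.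
Proof.
set s := undup (msupp f ++ msupp g ++ msupp (f + g)).
have uniq_s : uniq s by apply: undup_uniq.
have supp_f : {subset msupp f <= s} by move=> m fm; rewrite mem_undup !mem_cat fm.
have supp_g : {subset msupp g <= s} by move=> m gm; rewrite mem_undup !mem_cat gm !orbT.
have supp_fg : {subset msupp (f + g) <= s}.
  by move=> m fgm; rewrite mem_undup !mem_cat fgm !orbT.
rewrite !(poly_act_supp w uniq_s) // -big_split /=.
by apply: eq_bigr => m _; rewrite mcoeffD scalerDl.
Qed.

Lemma poly_actZ w c (f : {mpoly k[n]}) :
  poly_act br w t (c *: f) = c *: poly_act br w t f.
Proof.
rewrite (@poly_act_supp _ _ (msupp f)) ?msupp_uniq //; last exact: msuppZ_le.
by rewrite /poly_act scaler_sumr; apply: eq_bigr => m _; rewrite mcoeffZ scalerA.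
Qed.

Lemma poly_act_sum w I (s : seq I) (P : pred I) (F : I -> {mpoly k[n]}) :
  poly_act br w t (\sum_(i <- s | P i) F i) = \sum_(i <- s | P i) poly_act br w t (F i).
Proof.
apply: (big_morph (poly_act br w t)) => [f g|]; first exact: poly_actD.
by rewrite /poly_act msupp0 big_nil.
Qed.

Lemma poly_actX w m : poly_act br w t 'X_[m] = mono_act br w t m.
Proof. by rewrite /poly_act msuppX big_seq1 mcoeffX eqxx scale1r. Qed.

Lemma mono_act0 w : mono_act br w t 0%MM = w.
Proof.
by rewrite /mono_act; elim: (enum 'I_n) w => //= i s IH w; rewrite mnm0E /= IH.
Qed.

Lemma poly_act1 w : poly_act br w t 1 = w.
Proof. by rewrite -mpolyX0 poly_actX mono_act0. Qed.

Lemma Fit_mono_act w m : Fit br w -> Fit br (mono_act br w t m).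
Proof.
by rewrite /mono_act; elim: (enum 'I_n) w => //= i s IH w Fw; apply/IH/Fit_iter_br.
Qed.

End PolyAction.

(* Over no variables a nonzero polynomial is a nonzero constant. *)
Lemma torsion_free_ord0 (t : 'I_0 -> V) : torsion_free br t.
Proof.
move=> f nz_f u _.
have m0 (m : 'X_{1..0}) : m = 0%MM by apply/mnmP => -[].
have f0 : 0%MM \in msupp f.
  by move: nz_f; rewrite -msupp_eq0; case: (msupp f) => // m s _; rewrite (m0 m) mem_head.
have supp_f : perm_eq (msupp f) [:: 0%MM].
  apply: uniq_perm; [exact: msupp_uniq | by [] | ].
  by move=> m; rewrite (m0 m) inE eqxx f0.
rewrite /poly_act (perm_big _ supp_f) big_seq1 mono_act0 => /eqP.
by rewrite scaler_eq0 mcoeff_eq0 f0 => /eqP.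
Qed.

Hypothesis metV : metabelian br.

Definition derived (w : V) : Prop :=
  exists s : seq (V * V), w = \sum_(p <- s) br p.1 p.2.

Lemma derived_ideal : is_ideal br derived.
Proof.
split.
- by exists [::]; rewrite big_nil.
- by move=> x y [s ->] [s' ->]; exists (s ++ s'); rewrite big_cat.
- move=> a x [s ->]; exists (map (fun p => (a *: p.1, p.2)) s).
  by rewrite big_map scaler_sumr; apply: eq_bigr => p _; rewrite brZl.
- move=> x y [s ->]; exists (map (fun p => (br p.1 p.2, y)) s).
  by rewrite big_map br_suml.
Qed.

Lemma derived_nilpotent : nilpotent_ideal br derived.
Proof.
exists 1%N => _ [|y [|]] // [s ->] ys _ /=.
have [s' ->] := ys y (mem_head _ _).
rewrite br_suml big1 // => p _; rewrite br_sumr big1 // => p' _; exact: metV.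
Qed.

Lemma Fit_br x y : Fit br (br x y).
Proof.
apply: (Fit_nilpotent_ideal derived_ideal derived_nilpotent).
by exists [:: (x, y)]; rewrite big_seq1.
Qed.

Section AbelianFit.
Hypothesis Fit_abelian : forall x y, Fit br x -> Fit br y -> br x y = 0.

Lemma Fit_FitF x : Fit br x -> FitF br x.
Proof. by move=> Fx y; apply: Fit_abelian => //; apply: Fit_brl. Qed.

(* Jacobi, with the term [[y, z], w] vanishing as both factors lie in Fit. *)
Lemma br_Fit_comm w y z : Fit br w -> br (br w y) z = br (br w z) y.
Proof.
move=> Fw; have := jacobi w y z.
rewrite (Fit_abelian (Fit_br y z) Fw) addr0 (brC z w) brNl.
by move/eqP; rewrite subr_eq0 => /eqP.
Qed.

Section Monomials.
Variables (n : nat) (t : 'I_n -> V).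

Let mono_step (m : 'X_{1..n}) z i := iter (m i) (br^~ (t i)) z.

Lemma foldl_mono_step_br m s w y : Fit br w ->
  foldl (mono_step m) (br w y) s = br (foldl (mono_step m) w s) y.
Proof.
have iter_br j x v : Fit br v -> iter j (br^~ x) (br v y) = br (iter j (br^~ x) v) y.
  by move=> Fv; elim: j => //= j ->; apply/br_Fit_comm/Fit_iter_br.
elim: s w => //= i s IH w Fw.
by rewrite /mono_step iter_br // IH //; apply: Fit_iter_br.
Qed.

Lemma mono_actU w m i : Fit br w ->
  mono_act br w t (m + U_(i))%MM = br (mono_act br w t m) (t i).
Proof.
have notin_step s v : i \notin s ->
    foldl (mono_step (m + U_(i))%MM) v s = foldl (mono_step m) v s.
  elim: s v => //= j s IH v; rewrite inE negb_or => /andP [nij nis].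
  by rewrite IH // /mono_step mnmDE mnm1E (negbTE nij) addn0.
rewrite /mono_act -/(mono_step m) -/(mono_step (m + U_(i))%MM).
have : uniq (enum 'I_n) by apply: enum_uniq.
have : i \in enum 'I_n by rewrite mem_enum.
elim: (enum 'I_n) w => // j s IH w ijs /andP [njs uniq_s] Fw /=.
case: (eqVneq j i) => [eq_ji|nji].
  subst j; rewrite notin_step // -foldl_mono_step_br; last exact: Fit_iter_br.
  by rewrite /mono_step mnmDE mnm1E eqxx addn1.
rewrite inE eq_sym (negbTE nji) /= in ijs.
have -> : mono_step (m + U_(i))%MM w j = mono_step m w j.
  by rewrite /mono_step mnmDE mnm1E eq_sym (negbTE nji) addn0.
by apply: IH => //; apply: Fit_iter_br.
Qed.

Lemma poly_act_br w y f : Fit br w ->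
  poly_act br (br w y) t f = br (poly_act br w t f) y.
Proof.
move=> Fw; rewrite /poly_act br_suml; apply: eq_bigr => m _.
by rewrite brZl /mono_act foldl_mono_step_br.
Qed.

Lemma poly_act_mul_linear w g (c : 'I_n -> k) x : Fit br w ->
  Fit br (x - \sum_i c i *: t i) ->
  poly_act br w t (g * \sum_i c i *: 'X_i) = br (poly_act br w t g) x.
Proof.
move=> Fw Fx.
have monoP m : poly_act br w t ('X_[m] * \sum_i c i *: 'X_i) = br (mono_act br w t m) x.
  rewrite mulr_sumr poly_act_sum -[x](subrK (\sum_i c i *: t i)).
  rewrite brDr (Fit_abelian (Fit_mono_act _ _ Fw) Fx) add0r br_sumr.
  apply: eq_bigr => i _.
  by rewrite -scalerAr -mpolyXD poly_actZ poly_actX mono_actU // brZr.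
rewrite {1}[g]mpolyE mulr_suml poly_act_sum [in RHS]/poly_act br_suml.
by apply: eq_bigr => m _; rewrite -scalerAl poly_actZ monoP brZl.
Qed.

End Monomials.

Section ChangeOfVariables.
Variables (n N : nat) (b : 'I_n -> V) (x : 'I_N -> V) (al : 'I_N -> 'I_n -> k).
Hypothesis x_al : forall j, Fit br (x j - \sum_i al j i *: b i).

Let lf := [tuple \sum_i al j i *: ('X_i : {mpoly k[n]}) | j < N].

Lemma poly_act_comp w f : Fit br w -> poly_act br w x f = poly_act br w b (f \mPo lf).
Proof.
move=> Fw.
have iter_lf g j e : poly_act br w b (g * tnth lf j ^+ e) =
    iter e (br^~ (x j)) (poly_act br w b g).
  elim: e => [|e IH]; first by rewrite expr0 mulr1.
  by rewrite exprSr mulrA tnth_mktuple (poly_act_mul_linear _ Fw (x_al j)) /= -IH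
    tnth_mktuple.
have fold_lf g (m : 'X_{1..N}) s : poly_act br w b (g * \prod_(i <- s) tnth lf i ^+ m i) =
    foldl (fun z i => iter (m i) (br^~ (x i)) z) (poly_act br w b g) s.
  by elim: s g => [|i s IH] g /=; rewrite ?big_nil ?mulr1 // big_cons mulrA IH iter_lf.
rewrite [in LHS](mpolyE f) (comp_mpolyEX f lf) !poly_act_sum.
apply: eq_bigr => m _; rewrite !poly_actZ poly_actX comp_mpolyX; congr (_ *: _).
by rewrite -big_enum -[\prod_(i <- _) _]mul1r fold_lf poly_act1.
Qed.

Lemma Fit_kermx_comb (v : 'rV[k]_N) :
  v *m \matrix_(j, i) al j i = 0 -> Fit br (\sum_j v 0 j *: x j).
Proof.
move=> v_ker.
have comb0 : \sum_j v 0 j *: (\sum_i al j i *: b i) = 0.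
  transitivity (\sum_i (v *m \matrix_(j, i) al j i) 0 i *: b i).
    under eq_bigr => j _ do rewrite scaler_sumr.
    rewrite exchange_big /=; apply: eq_bigr => i _; rewrite mxE scaler_suml.
    by apply: eq_bigr => j _; rewrite mxE scalerA.
  by rewrite v_ker; apply: big1 => i _; rewrite mxE scale0r.
rewrite -[X in Fit br X]subr0 -{2}comb0 -sumrB.
under eq_bigr => j _ do rewrite -scalerBr.
by apply: Fit_sum => j _; apply/FitZ/x_al.
Qed.

Lemma torsion_free_comp : torsion_free br b -> Fit_indep x -> torsion_free br x.
Proof.
move=> tfb indx f nz_f w Fw; rewrite poly_act_comp //.
apply: tfb w Fw; apply: contra nz_f => /eqP f_lf0.
apply/eqP/(@comp_mpoly_row_free_eq0 k n N (\matrix_(j, i) al j i)).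
  rewrite -kermx_eq0; apply/negPn/negP => /rowV0Pn [v /sub_kermxP v_ker nz_v].
  case/negP: nz_v; apply/eqP/rowP => j; rewrite mxE.
  exact: (indx (fun j => v 0 j) (Fit_kermx_comb v_ker)).
rewrite -[RHS]f_lf0; congr (_ \mPo _); apply: eq_from_tnth => j; rewrite !tnth_mktuple.
by apply: eq_bigr => i _; rewrite mxE.
Qed.

End ChangeOfVariables.

Section UAlgebra.
Variables (n : nat) (b : 'I_n -> V).
Hypotheses (spanb : Fit_span b) (tfb : torsion_free br b).

Lemma Fit_coords N (x : 'I_N -> V) :
  exists al : 'I_N -> 'I_n -> k, forall j, Fit br (x j - \sum_i al j i *: b i).
Proof. exact: fin_all_exists (fun j => spanb (x j)). Qed.

Lemma torsion_free_Fit_indep N (x : 'I_N -> V) : Fit_indep x -> torsion_free br x.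
Proof. by have [al x_al] := Fit_coords x; apply: torsion_free_comp x_al tfb. Qed.

Lemma Fit_dep N (x : 'I_N -> V) : (n < N)%N -> ~ Fit_indep x.
Proof.
move=> ltnN indx; have [al x_al] := Fit_coords x.
have : kermx (\matrix_(j, i) al j i) != 0.
  rewrite kermx_eq0 /row_free; apply/negP => /eqP rkN.
  by have := rank_leq_col (\matrix_(j, i) al j i); rewrite rkN leqNgt ltnN.
case/rowV0Pn => v /sub_kermxP v_ker; apply/negP/negPn/eqP/rowP => j.
by rewrite mxE (indx _ (Fit_kermx_comb x_al v_ker)).
Qed.

(* Torsion-freeness applied to the linear form given by the coordinates of y. *)
Lemma Fit_of_br_eq0 w y : Fit br w -> w != 0 -> br w y = 0 -> Fit br y.
Proof.
move=> Fw nz_w wy0; have [al y_al] := spanb y.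
have [al0 | /forallPn [i nz_ali]] := boolP [forall i, al i == 0].
  by move: y_al; rewrite big1 ?subr0 // => i _; rewrite (eqP (forallP al0 i)) scale0r.
have nz_lf : \sum_i al i *: ('X_i : {mpoly k[n]}) != 0.
  by apply: contra nz_ali => /eqP lf0; rewrite -(mcoeff_linear_form al i) lf0 mcoeff0.
have := tfb nz_lf Fw; rewrite -(mul1r (\sum_i _)).
rewrite (poly_act_mul_linear _ Fw y_al) poly_act1 wy0 => /(_ erefl) w0.
by move: nz_w; rewrite w0 eqxx.
Qed.

Lemma U_algebra_Phi2 : Phi2 br.
Proof.
move=> x y [h1 h2]; have [//|nz_xy] := eqVneq (br x y) 0.
exact: Fit_abelian (Fit_of_br_eq0 (Fit_br x y) nz_xy h1)
                   (Fit_of_br_eq0 (Fit_br x y) nz_xy h2).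
Qed.

Lemma U_algebra_Phi3 : Phi3 br.
Proof.
move=> x y z [/eqP nz_x xy0 xz0].
have [Fx | nFx] := classic (Fit br x).
  by apply: Fit_abelian; [apply: (Fit_of_br_eq0 Fx nz_x xy0) | apply: (Fit_of_br_eq0 Fx nz_x xz0)].
have [//|nz_yz] := eqVneq (br y z) 0; case: nFx.
apply: (Fit_of_br_eq0 (Fit_br y z) nz_yz).
by have := jacobi y z x; rewrite (brC z x) xz0 oppr0 br0l xy0 br0l !addr0.
Qed.

Lemma U_algebra_Phi4 r : (n <= r)%N -> Phi4 br r.
Proof.
move=> le_nr x /(phi_Fit_indep Fit_FitF).
exact: Fit_dep (leq_ltn_trans le_nr (ltnSn r)).
Qed.

Lemma U_algebra_Phi5 r : Phi5 br r.
Proof.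
move=> N _ f nz_f z1 z2 x [fz0 nz_z] /(phi_Fit_indep Fit_FitF) indx.
exact/nz_z/(torsion_free_Fit_indep indx nz_f (Fit_br z1 z2) fz0).
Qed.

End UAlgebra.

End AbelianFit.

Lemma ideal_lnprod I x s : is_ideal br I -> I x -> I (lnprod br x s).
Proof. by case=> _ _ _ idbr; elim: s x => //= y s IH x Ix; apply/IH/idbr. Qed.

Section Phi2.
Hypothesis phi2V : Phi2 br.

Lemma nilpotent_ideal_abelian I : is_ideal br I -> nilpotent_ideal br I ->
  forall x y, I x -> I y -> br x y = 0.
Proof.
move=> idI [c nilI].
pose P m := forall x s, I x -> (forall y, y \in s -> I y) -> size s = m ->
  lnprod br x s = 0.
have step m : P m.+2 -> P m.+1.
  move=> Pm x s Ix; case/lastP: s => [//|s y] Is; rewrite size_rcons => -[sz_s].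
  rewrite /lnprod foldl_rcons -/(lnprod br x s); set v := lnprod br x s.
  have Iv : I v by apply: ideal_lnprod.
  have Iy : I y by apply: Is; rewrite mem_rcons mem_head.
  have Is' u : I u -> forall z, z \in rcons (rcons s y) u -> I z.
    by move=> Iu z; rewrite mem_rcons inE => /orP [/eqP -> //|]; apply: Is.
  apply: phi2V; split.
  - by have := Pm x _ Ix (Is' _ Iv); rewrite /lnprod !foldl_rcons; apply; rewrite !size_rcons sz_s.
  - by have := Pm x _ Ix (Is' _ Iy); rewrite /lnprod !foldl_rcons; apply; rewrite !size_rcons sz_s.
have P1 : P 1%N.
  case: c nilI => [|c] nilI.
    move=> x s Ix _ _; have /= := nilI x [::] Ix; rewrite /lnprod /= => -> //.
    by elim: s => //= y s; rewrite br0l.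
  by elim: c {nilI} (nilI : P c.+1) => // c IH Pc; apply/IH/step.
by move=> x y Ix Iy; apply: (P1 x [:: y]) => // z; rewrite inE => /eqP ->.
Qed.

Lemma Fit_abelian x y : Fit br x -> Fit br y -> br x y = 0.
Proof.
move=> [n [f [Hf ->]]] [m [g [Hg ->]]].
rewrite br_suml big1 // => i _; rewrite br_sumr big1 // => j _.
have [I [idI nilI Ifi]] := Hf i; have [J [idJ nilJ Jgj]] := Hg j.
apply: phi2V; split.
- by apply: (nilpotent_ideal_abelian idI nilI) => //; case: idI => _ _ _; apply.
- apply: (nilpotent_ideal_abelian idJ nilJ) => //; rewrite brC.
  by case: idJ => _ _ idZ idbr; rewrite -scaleN1r; apply/idZ/idbr.
Qed.

(* x + Fit(B) is then an abelian ideal: [w, x] = 0 for w in Fit by Phi2. *)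
Lemma FitF_Fit x : FitF br x -> Fit br x.
Proof.
move=> FitFx.
pose I z := exists c w, Fit br w /\ z = c *: x + w.
have brFx w : Fit br w -> br w x = 0.
  move=> Fw; apply: phi2V; split; first by apply: Fit_abelian => //; apply: Fit_brl.
  by rewrite (brC w x) brNl FitFx oppr0.
have idI : is_ideal br I.
  split.
  - by exists 0, 0; rewrite scale0r addr0; split=> //; apply: Fit0.
  - move=> _ _ [c [w [Fw ->]]] [c' [w' [Fw' ->]]]; exists (c + c'), (w + w').
    by rewrite scalerDl addrACA; split=> //; apply: FitD.
  - move=> a _ [c [w [Fw ->]]]; exists (a * c), (a *: w).
    by rewrite scalerDr scalerA; split=> //; apply: FitZ.
  - move=> _ y [c [w [Fw ->]]]; exists 0, (br (c *: x + w) y).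
    rewrite scale0r add0r brDl brZl; split=> //.
    by apply: FitD; [apply/FitZ/Fit_br | apply: Fit_brl].
have abI z y : I z -> I y -> br z y = 0.
  move=> [c [w [Fw ->]]] [c' [w' [Fw' ->]]].
  rewrite brDl !brDr !brZl !brZr brxx (brFx _ Fw) (Fit_abelian Fw Fw') brC (brFx _ Fw').
  by rewrite !(scaler0, oppr0, addr0).
apply: (Fit_nilpotent_ideal idI); last first.
  by exists 1, 0; rewrite scale1r addr0; split=> //; apply: Fit0.
by exists 1%N => z [|y [|]] // Iz Is _ /=; apply: abI => //; apply: Is; rewrite mem_head.
Qed.

Section Basis.
Hypothesis phi3V : Phi3 br.

Definition extend_fam n (b : 'I_n -> V) (y : V) (i : 'I_n.+1) : V :=
  if unlift ord_max i is Some j then b j else y.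

Lemma sum_extend_fam n (b : 'I_n -> V) y (al : 'I_n.+1 -> k) :
  \sum_i al i *: extend_fam b y i =
  \sum_(i < n) al (lift ord_max i) *: b i + al ord_max *: y.
Proof.
rewrite big_ord_recr /= /extend_fam unlift_none; congr (_ + _).
apply: eq_bigr => i _; suff -> : widen_ord (leqnSn n) i = lift ord_max i by rewrite liftK.
by apply: val_inj; rewrite /= /bump leqNgt ltn_ord.
Qed.

Lemma Fit_indep_extend n (b : 'I_n -> V) y : Fit_indep b ->
  ~ (exists al : 'I_n -> k, Fit br (y - \sum_i al i *: b i)) ->
  Fit_indep (extend_fam b y).
Proof.
move=> indb ny al; rewrite sum_extend_fam => Fal.
have al_max0 : al ord_max = 0.
  apply/eqP/negP => /negP nz; apply: ny.
  exists (fun i => - (al ord_max)^-1 * al (lift ord_max i)).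
  suff -> : y - \sum_i (- (al ord_max)^-1 * al (lift ord_max i)) *: b i =
            (al ord_max)^-1 *: (\sum_(i < n) al (lift ord_max i) *: b i + al ord_max *: y).
    exact: FitZ.
  rewrite scalerDr scalerA mulVf // scale1r addrC scaler_sumr -sumrN.
  by congr (_ + _); apply: eq_bigr => i _; rewrite mulNr scaleNr opprK scalerA.
rewrite al_max0 scale0r addr0 in Fal.
by move=> i; case: (unliftP ord_max i) => [j ->|->] //; apply: (indb _ Fal).
Qed.

Lemma Fit_span_Phi4 r (b : 'I_r -> V) : Phi4 br r -> Fit_indep b -> Fit_span b.
Proof.
move=> phi4V indb y; apply: NNPP => ny.
exact/phi4V/(Fit_indep_phi FitF_Fit)/(Fit_indep_extend indb ny).
Qed.

Lemma exists_Fit_basis r : Phi4 br r ->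
  exists n, (n <= r)%N /\ exists b : 'I_n -> V, Fit_span b /\ Fit_indep b.
Proof.
move=> phi4V.
suff ext_basis d n (b : 'I_n -> V) : (n + d = r)%N -> Fit_indep b ->
    exists n, (n <= r)%N /\ exists b : 'I_n -> V, Fit_span b /\ Fit_indep b.
  by apply: (ext_basis r 0%N (fun i : 'I_0 => 0)) => // ? ? [].
elim: d n b => [|d IH] n b ndr indb.
  rewrite addn0 in ndr; subst n; exists r; split=> //.
  by exists b; split=> //; apply: Fit_span_Phi4.
have [spanb | /not_all_ex_not [y ny]] := classic (Fit_span b).
  by exists n; split; [rewrite -ndr leq_addr | exists b].
by apply: (IH n.+1 (extend_fam b y)); [rewrite addSnnS | apply: Fit_indep_extend].
Qed.

(* For u in Fit, [u, b_0] is a product killed by f, hence zero; so if u != 0,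
   Phi3 puts b_0 in Fit, contradicting independence. *)
Lemma torsion_free_products n (b : 'I_n -> V) : Fit_indep b ->
  (forall f : {mpoly k[n]}, f != 0 -> forall z1 z2,
     poly_act br (br z1 z2) b f = 0 -> br z1 z2 = 0) ->
  torsion_free br b.
Proof.
case: n b => [|n] b indb tf_br; first exact: torsion_free_ord0.
move=> f nz_f u Fu fu0; set y := b ord0.
have uy0 : br u y = 0.
  by apply: (tf_br f nz_f); rewrite (poly_act_br Fit_abelian _ _ _ Fu) fu0 br0l.
apply/eqP/negP => /negP nz_u.
have Fy : Fit br y.
  apply: FitF_Fit => z; rewrite brC (phi3V (x := u)) ?oppr0 //.
  by split=> //; [apply/eqP | apply/Fit_abelian/Fit_br].
have := indb (fun i => (i == ord0)%:R); rewrite (bigD1 ord0) //= big1 => [|i ni].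
  by rewrite scale1r addr0 => /(_ Fy ord0) /eqP; rewrite eqxx oner_eq0.
by rewrite (negbTE ni) scale0r.
Qed.

End Basis.

End Phi2.

End LieAlgebra.

Section Characterisation.
Variables (k : fieldType) (V : lmodType k) (br : V -> V -> V).
Hypothesis lieV : is_lie br.

Lemma U_algebra_Phi r n : (n <= r)%N -> U_algebra_dim br n ->
  [/\ Phi1 br, Phi2 br, Phi3 br, Phi4 br r & Phi5 br r].
Proof.
move=> le_nr [metV Fab [b [[spanb _] tfb]]]; split=> //.
- exact (U_algebra_Phi2 lieV metV Fab spanb tfb).
- exact (U_algebra_Phi3 lieV metV Fab spanb tfb).
- exact (U_algebra_Phi4 lieV Fab spanb le_nr).
- exact (U_algebra_Phi5 lieV metV Fab spanb tfb (r := r)).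
Qed.

Lemma Phi_U_algebra r : Phi1 br -> Phi2 br -> Phi3 br -> Phi4 br r -> Phi5 br r ->
  exists n, (n <= r)%N /\ U_algebra_dim br n.
Proof.
move=> metV phi2V phi3V phi4V phi5V.
have [n [le_nr [b [spanb indb]]]] := exists_Fit_basis lieV metV phi2V phi4V.
exists n; split=> //; split=> //; first exact: Fit_abelian.
exists b; split=> //; apply: torsion_free_products => // f nz_f z1 z2 fz0.
apply: NNPP => nz_z; apply: (phi5V n le_nr f nz_f z1 z2 b (conj fz0 nz_z)).
exact: Fit_indep_phi (FitF_Fit lieV metV phi2V) indb.
Qed.

Lemma U_algebra_Phi'5 r (a : 'I_r -> V) :
  Fit_indep br a -> U_algebra_dim br r -> Phi'5 br a.
Proof.
move=> inda [metV Fab [b [[spanb _] tfb]]] f nz_f z1 z2.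
exact (torsion_free_Fit_indep lieV metV Fab spanb tfb inda nz_f
  (Fit_br lieV metV z1 z2)).
Qed.

Lemma Phi'5_U_algebra r (a : 'I_r -> V) : Fit_indep br a ->
  Phi1 br -> Phi2 br -> Phi3 br -> Phi4 br r -> Phi'5 br a -> U_algebra_dim br r.
Proof.
move=> inda metV phi2V phi3V phi4V phi'5V; split=> //; first exact: Fit_abelian.
exists a; split; last exact: torsion_free_products.
by split=> //; apply: Fit_span_Phi4.
Qed.

End Characterisation.

Section FreeMetabelianGenerators.
Variable k : fieldType.

Let e0 : 'I_2 := ord0.
Let e1 : 'I_2 := ord_max.

(* The two-dimensional non-abelian Lie algebra: [e1, e0] = e1. *)
Definition br2 (u v : 'rV[k]_2) : 'rV[k]_2 :=
  (u 0 e1 * v 0 e0 - u 0 e0 * v 0 e1) *: delta_mx 0 e1.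

Lemma br2_e0 u v : br2 u v 0 e0 = 0.
Proof. by rewrite mxE mxE mulr0. Qed.

Lemma br2_e1 u v : br2 u v 0 e1 = u 0 e1 * v 0 e0 - u 0 e0 * v 0 e1.
Proof. by rewrite !mxE !eqxx mulr1. Qed.

Lemma br2_lie : is_lie br2.
Proof.
split.
- by move=> a x y z; rewrite /br2 scalerA -scalerDl !mxE; congr (_ *: _); ring.
- by move=> a x y z; rewrite /br2 scalerA -scalerDl !mxE; congr (_ *: _); ring.
- by move=> x; rewrite /br2 mulrC subrr scale0r.
- move=> x y z; rewrite {1 3 5}/br2 !br2_e0 !br2_e1 -!scalerDl.
  by rewrite (_ : _ + _ + _ = 0) ?scale0r //; ring.
Qed.

Lemma br2_metabelian : metabelian br2.
Proof. by move=> x1 x2 x3 x4; rewrite /br2 !br2_e0 !mulr0 mul0r subrr scale0r. Qed.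

Lemma br2_not_FitF (u : 'rV[k]_2) : u 0 e0 = 1 -> br2 (br2 u (delta_mx 0 e1)) u != 0.
Proof.
move=> u0; apply/eqP => /(congr1 (fun v : 'rV[k]_2 => v 0 e1)).
rewrite br2_e1 br2_e0 br2_e1 u0 !mxE /= mulr0 mul0r subr0 mulr1 mul1r.
by move/eqP; rewrite sub0r oppr_eq0 oner_eq0.
Qed.

Definition lie_comb r (al : 'I_r -> k) (s : seq 'I_r) : lie_term k r :=
  foldr (fun i t => LAdd (LScale (al i) (LVar k i)) t) (LZero k r) s.

Lemma lie_eval_comb r (C : lmodType k) (brC : C -> C -> C) (c : 'I_r -> C) al s :
  lie_eval brC c (lie_comb al s) = \sum_(i <- s) al i *: c i.
Proof. by elim: s => [|i s IH] /=; rewrite ?big_nil ?big_cons ?IH. Qed.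

(* Send a_i to u_i := e0 / al_i and every other generator to e1: then
   sum_i al_i u_i has e0-coordinate 1 and [[sum, a_j], sum] becomes nonzero. *)
Lemma free_gens_FitF_indep r (B : lmodType k) (brB : B -> B -> B) (a : 'I_r -> B) :
  (2 <= r)%N -> free_metabelian_gens brB a ->
  forall al : 'I_r -> k, FitF brB (\sum_i al i *: a i) -> forall i, al i = 0.
Proof.
move=> r2 free_a al FitF_al i; apply/eqP/negP => /negP nz_ali.
have [j nji] : exists j : 'I_r, j != i.
  have [eq_i0|] := eqVneq i (Ordinal (ltnW r2)); last by exists (Ordinal (ltnW r2)); rewrite eq_sym.
  by exists (Ordinal r2); rewrite eq_i0; apply/eqP => -[].
pose t := lie_comb al (enum 'I_r).
pose c j := if j == i then (al i)^-1 *: delta_mx 0 e0 else delta_mx 0 e1 : 'rV[k]_2.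
have := free_a (LBr (LBr t (LVar k j)) t) (LZero k r).
rewrite /= !lie_eval_comb big_enum /= FitF_al => /(_ erefl _ _ br2_lie br2_metabelian c).
rewrite lie_eval_comb big_enum /= {2}/c (negbTE nji) => /eqP; apply/negP/br2_not_FitF.
rewrite summxE (bigD1 i) //= big1 => [|l nli]; last by rewrite /c (negbTE nli) !mxE mulr0.
by rewrite /c eqxx !mxE mulr1 mulfV // addr0.
Qed.

End FreeMetabelianGenerators.

Unset Implicit Arguments.
Theorem lemma3p6 (k : finFieldType) (r : nat) : (2 <= r)%N ->
  (* (a) *)
  (forall (B : lmodType k) (br : B -> B -> B), is_lie br ->
     ([/\ Phi1 br, Phi2 br, Phi3 br, Phi4 br r & Phi5 br r] <->
      exists n : nat, (n <= r)%N /\ U_algebra_dim br n)) /\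
  (* (b) *)
  (forall (B : lmodType k) (br : B -> B -> B) (a : 'I_r -> B),
     is_lie br -> free_metabelian_gens br a ->
     ([/\ Phi1 br, Phi2 br, Phi3 br, Phi4 br r & Phi'5 br a] <->
      U_algebra_dim br r)).
Proof.
move=> r2; split=> [B br lieB | B br a lieB free_a].
  split=> [[metB phi2B phi3B phi4B phi5B] | [n [le_nr UB]]].
    exact: Phi_U_algebra.
  exact: U_algebra_Phi le_nr UB.
have inda : (forall x y, Fit br x -> Fit br y -> br x y = 0) -> Fit_indep br a.
  by move=> Fab al /(Fit_FitF lieB Fab); apply: free_gens_FitF_indep.
split=> [[metB phi2B phi3B phi4B phi'5B] | UB].
  exact: Phi'5_U_algebra (inda (Fit_abelian lieB phi2B)) metB phi2B phi3B phi4B phi'5B.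
have [metB Fab _] := UB; have [_ phi2B phi3B phi4B _] := U_algebra_Phi lieB (leqnn r) UB.
by split=> //; apply: U_algebra_Phi'5 (inda Fab) UB.
Qed.
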